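(* Let $k\ge3$ be odd and let $G$ be a connected $k$-uniform hypergraph (with at least one edge). Then $0$ is not an eigenvalue of the signless Laplacian tensor $\mathcal D+\mathcal A$ of $G$.
   Context: A $k$-uniform hypergraph $G=(V,E)$ has vertex set $V=[n]$ ($n\ge k$) and edge set $E$ of $k$-element subsets; $d_i$ is the number of edges containing $i$. $G$ is connected if any two distinct vertices are joined by a sequence of edges with consecutive edges intersecting. The adjacency tensor $\mathcal A$ has $a_{i_1\dots i_k}=\frac1{(k-1)!}$ if $\{i_1,\dots,i_k\}\in E$, else $0$; $\mathcal D$ is diagonal with $d_{i\dots i}=d_i$. $\lambda\in\mathbb C$ is an eigenvalue of a tensor $\mathcal T$ if there is $\mathbf x\in\mathbb C^n\setminus\{0\}$ with $\sum_{i_2,\dots,i_k}t_{ii_2\dots i_k}x_{i_2}\cdots x_{i_k}=\lambda x_i^{k-1}$ for all $i\in[n]$. *)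

(* Complex numbers modelled by an arbitrary numClosedFieldType
   (algebraically closed field of char 0 with norm/conjugation, e.g. algC). *)
From HB Require Import structures.
From mathcomp Require Import all_boot all_order all_algebra.
Set Implicit Arguments. Unset Strict Implicit. Unset Printing Implicit Defensive.
Import Order.TTheory GRing.Theory Num.Theory.
Local Open Scope ring_scope.

Definition k_uniform (n k : nat) (E : {set {set 'I_n}}) : Prop :=
  forall e, e \in E -> #|e| = k.

Definition hconnected (n : nat) (E : {set {set 'I_n}}) : Prop :=
  forall u v : 'I_n, u != v ->
    exists (e0 : {set 'I_n}) (es : seq {set 'I_n}),
      [/\ e0 \in E, all (fun e => e \in E) es, u \in e0, v \in last e0 es
        & path (fun e f => e :&: f != set0) e0 es].

Definition hdeg (n : nat) (E : {set {set 'I_n}}) (i : 'I_n) : nat :=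
  #|[set e in E | i \in e]|.

(* An order-k tensor of dimension n is represented as a function of the first
   index i and the remaining k-1 indices (i_2,...,i_k) given as a finite function
   t : 'I_(k-1) -> 'I_n. *)
Definition tensor (C : Type) (n k : nat) := 'I_n -> {ffun 'I_k.-1 -> 'I_n} -> C.

Definition adj_tensor (C : fieldType) (n k : nat) (E : {set {set 'I_n}})
  : tensor C n k :=
  fun i t => if (i |: [set t j | j : 'I_k.-1]) \in E then ((k.-1)`!%:R)^-1 else 0.

Definition deg_tensor (C : fieldType) (n k : nat) (E : {set {set 'I_n}})
  : tensor C n k :=
  fun i t => if t == [ffun => i] then (hdeg E i)%:R else 0.

Definition signless_laplacian (C : fieldType) (n k : nat) (E : {set {set 'I_n}})
  : tensor C n k :=
  fun i t => @deg_tensor C n k E i t + @adj_tensor C n k E i t.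

Definition tensor_apply (C : fieldType) (n k : nat) (T : tensor C n k)
  (x : 'I_n -> C) (i : 'I_n) : C :=
  \sum_(t : {ffun 'I_k.-1 -> 'I_n}) T i t * \prod_(j < k.-1) x (t j).

Definition tensor_eigenvalue (C : fieldType) (n k : nat) (T : tensor C n k)
  (lam : C) : Prop :=
  exists x : 'I_n -> C, (exists i, x i != 0) /\
    forall i, tensor_apply T x i = lam * x i ^+ k.-1.

From HB Require Import structures.
From mathcomp Require Import all_boot all_order all_algebra.
Import Order.TTheory GRing.Theory Num.Theory.
Set Implicit Arguments. Unset Strict Implicit.
Local Open Scope ring_scope.

(* Write k = K + 1.  The adjacency part of (D + A) x at vertex i sums
   x_{t_1} ... x_{t_K} over the tuples t with {i} u {t_j} an edge; every edge
   through i contributes exactly K! such tuples (the orderings of e \ i), so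
   (D + A) x_i = (1/K!) sum_t (x_i^K + prod_j x_{t_j}).  If (D + A) x = 0 and
   |x_i| is maximal, every term - prod_j x_{t_j} / x_i^K has modulus <= 1 and
   the terms sum to their number, so all equal 1 (equality in the triangle
   inequality).  Hence modulus-maximality spreads along edges, and by
   connectivity all |x_v| equal the maximum M > 0.  Then every edge e and
   u in e satisfy x_u^k = - prod_{v in e} x_v, so x_v^k = c is constant and,
   raising to the odd power k, c^k = - c^k, i.e. c = 0: a contradiction. *)

Section EdgeOrderings.
Variables (n K : nat) (E : {set {set 'I_n}}).
Hypothesis uniformE : k_uniform K.+1 E.

Definition orderings (e : {set 'I_n}) (i : 'I_n) : {set {ffun 'I_K -> 'I_n}} :=
  [set f in ffun_on (mem (e :\ i)) | injectiveb f].

Lemma card_edge_minus (e : {set 'I_n}) (i : 'I_n) :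
  e \in E -> i \in e -> #|e :\ i| = K.
Proof.
move=> eE ie; have := uniformE eE.
by rewrite (cardsD1 i e) ie; case.
Qed.

Lemma card_orderings (e : {set 'I_n}) (i : 'I_n) :
  e \in E -> i \in e -> #|orderings e i| = K`!.
Proof.
move=> eE ie; rewrite card_inj_ffuns_on card_ord.
by rewrite -[#|mem _|]/#|e :\ i| card_edge_minus // ffactnn.
Qed.

Lemma orderingsP (e : {set 'I_n}) (i : 'I_n) (t : {ffun 'I_K -> 'I_n}) :
  e \in E -> i \in e ->
  (i |: [set t j | j : 'I_K] == e) = (t \in orderings e i).
Proof.
move=> eE ie; have ce := uniformE eE.
set im := [set t j | j : 'I_K].
have im_le : (#|im| <= K)%N by rewrite (leq_trans (leq_imset_card _ _)) ?card_ord.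
rewrite inE; apply/eqP/andP => [im_e | [/ffun_onP t_on /injectiveP t_inj]].
- have := cardsU1 i im; rewrite im_e ce.
  case: (boolP (i \in im)) => /= i_im card_im.
    by move: im_le; rewrite add0n in card_im; rewrite -card_im ltnn.
  split.
  + have t_im j : t j \in im by apply: imset_f.
    apply/ffun_onP => j; rewrite !inE -im_e setU1r ?t_im // andbT.
    by apply: contra i_im => /eqP <-.
  + have /imset_injP t_inj : #|im| == #|predT : {pred 'I_K}|.
      by rewrite card_ord add1n in card_im *; case: card_im => ->.
    by apply/injectiveP => j1 j2; apply: t_inj.
- have im_sub : im \subset e :\ i.
    by apply/subsetP => v /imsetP [j _ ->]; apply: t_on.
  suff -> : im = e :\ i by rewrite setD1K.
  apply/eqP; rewrite eqEcard im_sub card_edge_minus //.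
  by rewrite /im (card_imset _ t_inj) card_ord leqnn.
Qed.

Lemma edge_ordering (e : {set 'I_n}) (u : 'I_n) : e \in E -> u \in e ->
  exists t : {ffun 'I_K -> 'I_n},
    [/\ u |: [set t j | j : 'I_K] = e, u \notin [set t j | j : 'I_K]
       & injective t].
Proof.
move=> eE ue.
have : (0 < #|orderings e u|)%N by rewrite card_orderings // fact_gt0.
case/card_gt0P => t t_ord; exists t.
have := t_ord; rewrite -orderingsP // => /eqP ->.
move: t_ord; rewrite inE => /andP [/ffun_onP t_on /injectiveP t_inj].
split=> //; apply/imsetP => [[j _ u_t]].
by have := t_on j; rewrite -u_t !inE eqxx.
Qed.

Definition edge_tuples (i : 'I_n) : {set {ffun 'I_K -> 'I_n}} :=
  [set t : {ffun 'I_K -> 'I_n} | (i |: [set t j | j : 'I_K]) \in E].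

(* Each of the d_i edges through i is hit by exactly K! tuples. *)
Lemma card_edge_tuples (i : 'I_n) : #|edge_tuples i| = (hdeg E i * K`!)%N.
Proof.
rewrite -sum1_card.
rewrite (partition_big (fun t : {ffun 'I_K -> 'I_n} => i |: [set t j | j : 'I_K])
          (fun e => (e \in E) && (i \in e))) /=; last first.
  by move=> t; rewrite inE => ->; rewrite setU11.
rewrite /hdeg -sum1_card big_distrl /=.
apply: eq_big => [e|e /andP [eE ie]]; first by rewrite inE.
rewrite mul1n -(card_orderings eE ie) -sum1_card; apply: eq_bigl => t.
by rewrite -orderingsP // inE; case: eqP => [->|]; rewrite ?eE ?andbF.
Qed.

End EdgeOrderings.

Section SignlessLaplacian.
Variables (C : numClosedFieldType) (n K : nat) (E : {set {set 'I_n}}).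

Local Notation Q := (@signless_laplacian C n K.+1 E).

Lemma signless_laplacian_apply (x : 'I_n -> C) (i : 'I_n) :
  tensor_apply Q x i = (hdeg E i)%:R * x i ^+ K +
    (K`!%:R)^-1 * \sum_(t in edge_tuples K E i) \prod_(j < K) x (t j).
Proof.
rewrite /tensor_apply /signless_laplacian.
under eq_bigr do rewrite mulrDl.
rewrite big_split /=; congr (_ + _).
  rewrite (bigD1 [ffun=> i]) //= /deg_tensor eqxx.
  rewrite [X in _ + X]big1 ?addr0; last by move=> t /negPf ->; rewrite mul0r.
  by under eq_bigr do rewrite ffunE; rewrite prodr_const card_ord.
rewrite mulr_sumr [RHS]big_mkcond /=; apply: eq_bigr => t _.
by rewrite /adj_tensor /edge_tuples inE /=; case: ifP; rewrite ?mul0r ?mulr0.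
Qed.

Hypothesis uniformE : k_uniform K.+1 E.

Lemma extremal_tuple_product (x : 'I_n -> C) (i : 'I_n) (M : C) :
  (forall j, `|x j| <= M) -> `|x i| = M -> 0 < M -> tensor_apply Q x i = 0 ->
  forall t, t \in edge_tuples K E i -> \prod_(j < K) x (t j) = - x i ^+ K.
Proof.
move=> x_le_M xiM M_gt0; rewrite signless_laplacian_apply.
set S := edge_tuples K E i; set w := x i ^+ K => Qx0.
have norm_w : `|w| = M ^+ K by rewrite normrX xiM.
have w_neq0 : w != 0 by rewrite -normr_eq0 norm_w expf_neq0 // gt_eqF.
have fact_neq0 : (K`!%:R : C) != 0 by rewrite pnatr_eq0 -lt0n fact_gt0.
have deg_S : (hdeg E i)%:R = (K`!%:R)^-1 * (#|S|%:R : C).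
  by rewrite /S card_edge_tuples // natrM mulrCA mulVf // mulr1.
move/eqP: Qx0; rewrite deg_S -mulrA -mulrDr mulf_eq0 invr_eq0 (negPf fact_neq0).
rewrite /= addr_eq0 => /eqP sumS.
have terms_sum : \sum_(t in S) (- \prod_(j < K) x (t j) / w) = \sum_(t in S) 1.
  by rewrite -mulr_suml sumrN sumr_const -sumS mulfK.
have terms_le1 t : t \in S -> `|- \prod_(j < K) x (t j) / w| <= 1.
  move=> _; rewrite normrM normrN normrV ?unitfE // norm_w normr_prod.
  have -> : M ^+ K = \prod_(j < K) M by rewrite prodr_const card_ord.
  rewrite ler_pdivrMr ?prodr_gt0 // mul1r.
  by apply: ler_prod => j _; rewrite normr_ge0 x_le_M.
move=> t tS; have := normC_sum_upper terms_le1 terms_sum tS.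
by move/(canRL (divfK w_neq0)); rewrite mul1r => <-; rewrite opprK.
Qed.

End SignlessLaplacian.

Lemma real_argmax (R : numDomainType) (I : finType) (f : I -> R) (i1 : I) :
  (forall i, f i \is Num.real) -> exists i0, forall j, f j <= f i0.
Proof.
move=> f_real.
suff [i0 max_i0] : exists i0, forall j, j \in enum I -> f j <= f i0.
  by exists i0 => j; apply: max_i0; rewrite mem_enum.
elim: (enum I) => [|a s [i0 IH]]; first by exists i1.
case/orP: (real_leVge (f_real a) (f_real i0)) => [fa_le | fi0_le].
  by exists i0 => j; rewrite inE => /orP [/eqP -> //|]; apply: IH.
exists a => j; rewrite inE => /orP [/eqP -> //| js].
exact: le_trans (IH j js) fi0_le.
Qed.

Lemma norm_prod_extremal (R : numDomainType) (I : finType) (f : I -> R) (M : R) :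
  0 < M -> (forall j, `|f j| <= M) -> `|\prod_j f j| = M ^+ #|I| ->
  forall j, `|f j| = M.
Proof.
move=> M_gt0 f_le_M norm_prod j0; apply/eqP; rewrite eq_le f_le_M /=.
set P := \prod_(j | j != j0) M.
have P_gt0 : 0 < P by apply: prodr_gt0.
have MP : M ^+ #|I| = M * P by rewrite -prodr_const (bigD1 j0).
rewrite -(ler_pM2r P_gt0) -MP -norm_prod normr_prod (bigD1 j0) //=.
rewrite ler_wpM2l ?normr_ge0 //.
by apply: ler_prod => j _; rewrite normr_ge0 f_le_M.
Qed.

Lemma hconnected_closed (n : nat) (E : {set {set 'I_n}}) (P : pred 'I_n) :
  hconnected E ->
  (forall e, e \in E -> forall u v, u \in e -> v \in e -> P u -> P v) ->
  forall u v, P u -> P v.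
Proof.
move=> connE P_edge u v; case: (eqVneq u v) => [-> //|u_neq_v].
have [e0 [es [e0E esE u_e0 v_last e_path]]] := connE u v u_neq_v.
elim: es e0 u e0E esE u_e0 v_last e_path {u_neq_v} => [|f es IH] e0 u e0E /=.
  by move=> _ u_e0 v_e0 _; apply: P_edge u_e0 v_e0.
case/andP=> fE esE u_e0 v_last /andP [/set0Pn [w] /setIP [w_e0 w_f] e_path] Pu.
exact: IH w fE esE w_f v_last e_path (P_edge e0 e0E u w u_e0 w_e0 Pu).
Qed.

(* With x_v^k = c on an edge e of odd size k and c = - prod_{v in e} x_v,
   raising to the k-th power gives c^k = - c^k, hence c = 0. *)
Lemma odd_edge_power_zero (R : numDomainType) (T : finType) (e : {set T})
  (x : T -> R) (c : R) :
  odd #|e| -> (forall v, v \in e -> x v ^+ #|e| = c) ->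
  c = - \prod_(v in e) x v -> c = 0.
Proof.
move=> e_odd x_c c_prod.
have prod_pow : (\prod_(v in e) x v) ^+ #|e| = c ^+ #|e|.
  by rewrite -prodrXl (eq_bigr _ x_c) prodr_const.
have cpow_opp : c ^+ #|e| = - c ^+ #|e|.
  by rewrite {1}c_prod exprNn -signr_odd e_odd expr1 mulN1r prod_pow.
have : c ^+ #|e| *+ 2 == 0 by rewrite mulr2n {1}cpow_opp addNr.
by rewrite mulrn_eq0 /= expf_eq0 => /andP [_ /eqP].
Qed.

Section ZeroEigenvector.
Variables (C : numClosedFieldType) (n K : nat) (E : {set {set 'I_n}}).
Hypothesis uniformE : k_uniform K.+1 E.
Variables (x : 'I_n -> C) (M : C).
Hypothesis Qx0 : forall i, tensor_apply (@signless_laplacian C n K.+1 E) x i = 0.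
Hypotheses (x_le_M : forall j, `|x j| <= M) (M_gt0 : 0 < M).

Lemma edge_extremal (e : {set 'I_n}) (u w : 'I_n) :
  e \in E -> u \in e -> w \in e -> `|x u| = M -> `|x w| = M.
Proof.
move=> eE ue we xuM; case: (eqVneq u w) => [<- // | u_neq_w].
have [t [e_t _ _]] := edge_ordering uniformE eE ue.
have tS : t \in edge_tuples K E u by rewrite inE e_t.
have prod_t := extremal_tuple_product uniformE x_le_M xuM M_gt0 (Qx0 u) tS.
have : w \in [set t j | j : 'I_K].
  by move: we; rewrite -e_t => /setU1P [w_u|//]; rewrite w_u eqxx in u_neq_w.
have norm_t : `|\prod_(j < K) x (t j)| = M ^+ #|'I_K|.
  by rewrite prod_t normrN normrX xuM card_ord.
by case/imsetP => j0 _ ->; apply: (norm_prod_extremal M_gt0 _ norm_t).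
Qed.

Lemma edge_product (e : {set 'I_n}) (u : 'I_n) :
  e \in E -> u \in e -> `|x u| = M -> x u ^+ K.+1 = - \prod_(v in e) x v.
Proof.
move=> eE ue xuM; have [t [e_t u_t t_inj]] := edge_ordering uniformE eE ue.
have tS : t \in edge_tuples K E u by rewrite inE e_t.
rewrite -e_t big_setU1 //= big_imset /=; last by move=> a b _ _; apply: t_inj.
rewrite -[X in - (_ * X)]/(\prod_(j < K) x (t j)).
rewrite (extremal_tuple_product uniformE x_le_M xuM M_gt0 (Qx0 u) tS).
by rewrite mulrN opprK exprS.
Qed.

End ZeroEigenvector.

Theorem proposition4p1 (C : numClosedFieldType) (n k : nat)
  (E : {set {set 'I_n}}) :
  odd k -> (3 <= k)%N -> (k <= n)%N ->
  k_uniform k E -> E != set0 -> hconnected E ->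
  ~ tensor_eigenvalue (@signless_laplacian C n k E) 0.
Proof.
move=> k_odd _ _ uniformE E_neq0 connE.
case: k k_odd uniformE => [//|K] k_odd uniformE [x [[i1 xi1_neq0] eig_x]].
have Qx0 i : tensor_apply (@signless_laplacian C n K.+1 E) x i = 0.
  by rewrite eig_x mul0r.
have [i0 x_le_M] := real_argmax i1 (fun i => normr_real (x i)).
set M := `|x i0| in x_le_M.
have M_gt0 : 0 < M by rewrite (lt_le_trans _ (x_le_M i1)) ?normr_gt0.
have extremal := edge_extremal uniformE Qx0 x_le_M M_gt0.
have prod_e := edge_product uniformE Qx0 x_le_M M_gt0.
have xM v : `|x v| = M.
  apply/eqP; apply: (@hconnected_closed n E (fun v => `|x v| == M) connE _ i0).
    by move=> e eE u w ue we /eqP xuM; rewrite (extremal e u w eE ue we xuM).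
  exact: eqxx.
have x_pow v : x v ^+ K.+1 = x i0 ^+ K.+1.
  apply/eqP; apply: (@hconnected_closed n E
    (fun v => x v ^+ K.+1 == x i0 ^+ K.+1) connE _ i0).
    move=> e eE u w ue we.
    by rewrite (prod_e e u eE ue (xM u)) (prod_e e w eE we (xM w)).
  exact: eqxx.
case/set0Pn: E_neq0 => e eE.
have [u ue] : exists u, u \in e by apply/card_gt0P; rewrite (uniformE e eE).
have c0 : x i0 ^+ K.+1 = 0.
  have e_odd : odd #|e| by rewrite (uniformE e eE).
  have x_c v : v \in e -> x v ^+ #|e| = x i0 ^+ K.+1.
    by rewrite (uniformE e eE) x_pow.
  apply: (odd_edge_power_zero e_odd x_c).
  by rewrite -(x_pow u) (prod_e e u eE ue (xM u)).
by move/eqP: c0; rewrite expf_eq0 /= -normr_eq0 -/M gt_eqF.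
Qed.
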